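(* Let $K$ be a commutative field and $L$ a (possibly noncommutative) division ring containing $K$ in its center such that every element of $L\setminus K$ is transcendental over $K$. Let $A,B$ be nonzero finite-dimensional $K$-subspaces of $L$. Then $\dim_K\langle AB\rangle\geq\dim_KA+\dim_KB-1$.
   Context: For $S\subset L$, $\langle S\rangle$ denotes the $K$-subspace of $L$ spanned by $S$; $AB=\{ab\mid a\in A,b\in B\}$. *)

From HB Require Import structures.
From mathcomp Require Import all_boot all_order all_algebra.
Set Implicit Arguments. Unset Strict Implicit. Unset Printing Implicit Defensive.
Import GRing.Theory.
Local Open Scope ring_scope.

(* K : fieldType, L : unitAlgType K.  Being an algebra (scaling associates on
   both sides) means the image k%:A of K lies in the center of L. *)

Section LinAlg.
Variables (K : fieldType) (L : unitAlgType K).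

Definition division_ring : Prop := forall x : L, x != 0 -> x \is a GRing.unit.

Definition algebraic_over (x : L) : Prop :=
  exists p : {poly K}, p != 0 /\ horner_alg x p = 0.

Definition in_K (x : L) : Prop := exists k : K, x = k%:A.

Definition kspan (S : L -> Prop) (v : L) : Prop :=
  exists (s : seq L) (c : seq K),
    (forall x, x \in s -> S x) /\ v = \sum_(i < size s) c`_i *: s`_i.

Definition ksubspace (S : L -> Prop) : Prop :=
  S 0 /\ forall (a : K) (x y : L), S x -> S y -> S (a *: x + y).

Definition kfree (s : seq L) : Prop :=
  forall c : 'I_(size s) -> K,
    \sum_(i < size s) c i *: s`_i = 0 -> forall i, c i = 0.

Definition kbasis_of (S : L -> Prop) (s : seq L) : Prop :=
  kfree s /\ forall v, S v <-> kspan (fun x => x \in s) v.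

Definition has_kdim (S : L -> Prop) (n : nat) : Prop :=
  exists s : seq L, size s = n /\ kbasis_of S s.

Definition prodset (A B : L -> Prop) (z : L) : Prop :=
  exists x y, A x /\ B y /\ z = x * y.

End LinAlg.

From HB Require Import structures.
From mathcomp Require Import all_boot all_order all_algebra.
From mathcomp Require Import zify.
From Stdlib Require Import Classical.
Set Implicit Arguments. Unset Strict Implicit. Unset Printing Implicit Defensive.
Import GRing.Theory.
Local Open Scope ring_scope.

(* The inequality is then proved in the stronger form "A B contained in C
   implies dim A + dim B <= dim C + 1" (lemma kemperman), following Kemperman
   and Dyson.  After translating A and B so that 1 lies in both, either
   A :&: B lies in K and the modular law for A, B concludes, or some
   transcendental g lies in A :&: B; then one of the pairs
   (A + A g, B :&: g^-1 B) or (A :&: A g, B + g^-1 B) still has its product in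
   C and has a larger dim A + dim B, or the same sum with a smaller B (an
   element stabilizing a nonzero finite-dimensional subspace is algebraic).
   Induction on this lexicographic progress ends the proof. *)

Section FiniteLinearAlgebra.
Variables (K : fieldType) (V : lmodType K).
Implicit Types (S U W : V -> Prop) (s t w u : seq V) (c : nat -> K).

Definition lcomb c s : V := \sum_(i < size s) c i *: s`_i.

Definition ord_coef n (f : 'I_n -> K) : nat -> K := fun k => oapp f 0 (insub k).

Lemma ord_coefE n (f : 'I_n -> K) (i : 'I_n) : ord_coef f i = f i.
Proof. by rewrite /ord_coef valK. Qed.

Lemma lcomb_nil c : lcomb c [::] = 0.
Proof. by rewrite /lcomb big_ord0. Qed.

Lemma lcomb_cons c x s : lcomb c (x :: s) = c 0%N *: x + lcomb (c \o succn) s.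
Proof. by rewrite /lcomb /= big_ord_recl. Qed.

Lemma eq_lcomb c1 c2 s :
  (forall i, (i < size s)%N -> c1 i = c2 i) -> lcomb c1 s = lcomb c2 s.
Proof. by move=> eq_c; apply: eq_bigr => i _; rewrite eq_c. Qed.

Lemma lcomb_cat c s1 s2 :
  lcomb c (s1 ++ s2) = lcomb c s1 + lcomb (fun i => c (size s1 + i)%N) s2.
Proof.
elim: s1 c => [|x s1 IH] c /=; first by rewrite lcomb_nil add0r.
by rewrite !lcomb_cons IH addrA.
Qed.

Lemma lcombD c1 c2 s : lcomb (fun i => c1 i + c2 i) s = lcomb c1 s + lcomb c2 s.
Proof. by rewrite /lcomb -big_split; apply: eq_bigr => i _; rewrite scalerDl. Qed.

Lemma lcombZ k c s : lcomb (fun i => k * c i) s = k *: lcomb c s.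
Proof. by rewrite /lcomb scaler_sumr; apply: eq_bigr => i _; rewrite scalerA. Qed.

Lemma lcomb0 s : lcomb (fun _ => 0) s = 0.
Proof. by rewrite /lcomb big1 // => i _; rewrite scale0r. Qed.

Lemma lcomb_delta s j : (j < size s)%N -> lcomb (fun i => (i == j)%:R) s = s`_j.
Proof.
elim: s j => [|x s IH] [|j] //= lt_j; rewrite lcomb_cons /=.
  by rewrite scale1r (eq_lcomb (c2 := fun _ => 0)) ?lcomb0 ?addr0.
by rewrite scale0r add0r -IH.
Qed.

Lemma lcomb_map (f : V -> V) c s :
  linear f -> lcomb c (map f s) = f (lcomb c s).
Proof.
move=> f_lin; have f0 : f 0 = 0.
  by have := f_lin (-1) 0 0; rewrite scaler0 addr0 scaleN1r addNr.
elim: s c => [|x s IH] c /=; first by rewrite !lcomb_nil f0.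
by rewrite !lcomb_cons IH f_lin.
Qed.

Definition lsubspace S := S 0 /\ forall a x y, S x -> S y -> S (a *: x + y).
Definition lspan s v := exists c, v = lcomb c s.
Definition lfree s := forall c, lcomb c s = 0 -> forall i, (i < size s)%N -> c i = 0.
Definition lbasis S s := lfree s /\ forall v, S v <-> lspan s v.
Definition ldim S n := exists s, size s = n /\ lbasis S s.

Lemma lsubspace0 S : lsubspace S -> S 0. Proof. by case. Qed.

Lemma lsubspaceD S x y : lsubspace S -> S x -> S y -> S (x + y).
Proof. by move=> [_ S_lin] Sx Sy; have := S_lin 1 x y Sx Sy; rewrite scale1r. Qed.

Lemma lsubspaceZ S a x : lsubspace S -> S x -> S (a *: x).
Proof. by move=> [S0 S_lin] Sx; rewrite -[a *: x]addr0; apply: S_lin. Qed.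

Lemma lsubspace_lcomb S c s : lsubspace S -> (forall x, x \in s -> S x) -> S (lcomb c s).
Proof.
move=> S_sub; elim: s c => [|x s IH] c sS; first by rewrite lcomb_nil; apply: lsubspace0.
rewrite lcomb_cons; apply: (proj2 S_sub); first by apply: sS; rewrite inE eqxx.
by apply: IH => y y_s; apply: sS; rewrite inE y_s orbT.
Qed.

Lemma lspan_subspace s : lsubspace (lspan s).
Proof.
split; first by exists (fun _ => 0); rewrite lcomb0.
move=> a x y [c1 ->] [c2 ->]; exists (fun i => a * c1 i + c2 i).
by rewrite lcombD lcombZ.
Qed.

Lemma lspan_mem s x : x \in s -> lspan s x.
Proof.
move=> x_s; exists (fun i => (i == index x s)%:R).
by rewrite lcomb_delta ?index_mem // nth_index.
Qed.

Lemma lspan_trans s t v :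
  (forall x, x \in s -> lspan t x) -> lspan s v -> lspan t v.
Proof. by move=> st [c ->]; apply: lsubspace_lcomb => //; apply: lspan_subspace. Qed.

Lemma ldim_subspace S d : ldim S d -> lsubspace S.
Proof.
move=> [s [_ [_ S_span]]]; have [span0 span_lin] := lspan_subspace s.
split; first by apply/S_span.
by move=> a x y /S_span Sx /S_span Sy; apply/S_span/span_lin.
Qed.

Lemma lbasis_mem S s x : lbasis S s -> x \in s -> S x.
Proof. by move=> [_ S_span] x_s; apply/S_span/lspan_mem. Qed.

Lemma lbasis_ldim S s : lbasis S s -> ldim S (size s).
Proof. by exists s. Qed.

(* More than size t vectors in the span of t are linearly dependent: a nonzero
   vector in the left kernel of their coordinate matrix gives a relation. *)
Lemma lcomb_dependent s t : (size t < size s)%N -> (forall x, x \in s -> lspan t x) ->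
  exists c, lcomb c s = 0 /\ exists2 i, (i < size s)%N & c i != 0.
Proof.
move=> lt_ts st.
have [C sC] := @fin_all_exists _ (fun _ => nat -> K)
  (fun (i : 'I_(size s)) c => s`_i = lcomb c t)
  (fun i => st _ (mem_nth 0 (ltn_ord i))).
pose M := \matrix_(i < size s, j < size t) C i j.
have : kermx M != 0.
  by rewrite kermx_eq0 -row_leq_rank -ltnNge (leq_ltn_trans (rank_leq_col M)).
case/rowV0Pn => v /sub_kermxP vM0 v_neq0.
exists (ord_coef (fun i => v 0 i)); split.
  rewrite /lcomb; under eq_bigr => i _ do rewrite ord_coefE sC /lcomb scaler_sumr.
  rewrite exchange_big /= big1 // => j _.
  have : (v *m M) 0 j = 0 by rewrite vM0 mxE.
  rewrite mxE => vMj; rewrite -[RHS](scale0r t`_j) -vMj scaler_suml.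
  by apply: eq_bigr => i _; rewrite mxE scalerA.
have /existsP [i vi] : [exists i, v 0 i != 0].
  apply: contraNT v_neq0 => /existsPn vi0; apply/eqP/rowP => i.
  by rewrite mxE; apply/eqP; move: (vi0 i); rewrite negbK.
by exists i; rewrite ?ord_coefE.
Qed.

Lemma lfree_size s t : lfree s -> (forall x, x \in s -> lspan t x) -> (size s <= size t)%N.
Proof.
move=> s_free st; rewrite leqNgt; apply/negP => lt_ts.
have [c [c0 [i lt_i]]] := lcomb_dependent lt_ts st.
by rewrite (s_free c c0 i lt_i) eqxx.
Qed.

Lemma lfree_rcons s v : lfree s -> ~ lspan s v -> lfree (rcons s v).
Proof.
move=> s_free v_out c.
rewrite -cats1 lcomb_cat lcomb_cons lcomb_nil addr0 addn0 /= => c0.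
have cv0 : c (size s) = 0.
  apply/eqP; apply: contra_notT v_out => cv_neq0.
  exists (fun i => - (c (size s))^-1 * c i); rewrite lcombZ.
  have -> : lcomb c s = - (c (size s) *: v) by apply/eqP; rewrite -addr_eq0; apply/eqP.
  by rewrite scaleNr scalerN opprK scalerA mulVf // scale1r.
rewrite cv0 scale0r addr0 in c0.
move=> i; rewrite size_cat addn1 ltnS leq_eqVlt => /orP [/eqP -> //|lt_i].
exact: s_free c0 i lt_i.
Qed.

Lemma lbasis_spanning S w : lsubspace S -> lfree w -> (forall x, x \in w -> S x) ->
  (forall v, S v -> lspan w v) -> lbasis S w.
Proof.
move=> S_sub w_free wS w_span; split=> // v.
by split=> [/w_span|[c ->]] //; apply: lsubspace_lcomb.
Qed.

Lemma lbasis_or_grow S w : lsubspace S -> lfree w -> (forall x, x \in w -> S x) ->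
  lbasis S w \/ exists v, lfree (rcons w v) /\ forall x, x \in rcons w v -> S x.
Proof.
move=> S_sub w_free wS.
have [w_span|w_short] := classic (forall v, S v -> lspan w v).
  by left; apply: lbasis_spanning.
have [v [Sv v_out]] : exists v, S v /\ ~ lspan w v.
  apply: NNPP => no_v; apply: w_short => v Sv.
  by apply: NNPP => v_out; apply: no_v; exists v.
right; exists v; split; first exact: lfree_rcons.
by move=> x; rewrite mem_rcons inE => /orP [/eqP ->|/wS].
Qed.

Lemma lbasis_extend S t w : lsubspace S -> (forall v, S v -> lspan t v) ->
  lfree w -> (forall x, x \in w -> S x) ->
  exists u, (forall x, x \in u -> S x) /\ lbasis S (w ++ u).
Proof.
move=> S_sub St; have [k] := ubnP (size t - size w).
elim: k w => // k IH w lt_k w_free wS.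
have [w_basis|[v [wv_free wvS]]] := lbasis_or_grow S_sub w_free wS.
  by exists [::]; rewrite cats0.
have lt_wt : (size w < size t)%N.
  by rewrite -(size_rcons w v); apply: lfree_size wv_free _ => x /wvS /St.
have [|u [uS u_basis]] := IH (rcons w v) _ wv_free wvS; first by rewrite size_rcons; lia.
exists (v :: u); rewrite -cat_rcons; split=> // x.
by rewrite inE => /orP [/eqP ->|/uS //]; apply: wvS; rewrite mem_rcons mem_head.
Qed.

Lemma lbasis_exists S t : lsubspace S -> (forall v, S v -> lspan t v) ->
  exists2 u, lbasis S u & (size u <= size t)%N.
Proof.
move=> S_sub St; have [|//|u [uS u_basis]] := @lbasis_extend S t [::] S_sub St.
  by move=> c _ i.
by exists u => //; apply: lfree_size (proj1 u_basis) _ => x /uS /St.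
Qed.

Lemma ldim_spanned S t d : ldim S d -> (forall v, S v -> lspan t v) -> (d <= size t)%N.
Proof.
move=> [s [<- s_basis]] St.
by apply: lfree_size (proj1 s_basis) _ => x /(lbasis_mem s_basis) /St.
Qed.

Lemma ldim_leq U S e d : ldim U e -> ldim S d -> (forall v, U v -> S v) -> (e <= d)%N.
Proof.
move=> Ue [s [<- [_ S_span]]] US.
by apply: ldim_spanned Ue _ => v /US /S_span.
Qed.

Lemma ldim_unique S a b : ldim S a -> ldim S b -> a = b.
Proof. by move=> Sa Sb; apply/eqP; rewrite eqn_leq !(ldim_leq Sa Sb, ldim_leq Sb Sa). Qed.

Lemma ldim_eq_incl U S d : ldim U d -> ldim S d -> (forall v, U v -> S v) ->
  forall v, S v -> U v.
Proof.
move=> Ud Sd US; have S_sub := ldim_subspace Sd.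
move: Ud Sd => [w [w_size w_basis]] [t [t_size t_basis]].
have [|u [_ wu_basis]] := lbasis_extend S_sub (fun v => proj1 (proj2 t_basis v))
  (proj1 w_basis).
  by move=> x /(lbasis_mem w_basis) /US.
have u_nil : u = [::].
  apply/size0nil/eqP; rewrite -(eqn_add2l d) addn0 -{2}t_size -{1}w_size -size_cat.
  by apply/eqP; apply: (ldim_unique (S := S)); [exists (w ++ u)|exists t].
by move: wu_basis; rewrite u_nil cats0 => [[_ wS]] v /wS /(proj2 w_basis).
Qed.

Lemma ldim_gt0 S d x : ldim S d -> S x -> x != 0 -> (0 < d)%N.
Proof.
move=> [s [<- [_ S_span]]] /S_span [c ->]; case: s {S_span} => //=.
by rewrite lcomb_nil eqxx.
Qed.

Lemma ldim_nonzero S d : ldim S d -> (0 < d)%N -> exists x, S x /\ x != 0.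
Proof.
move=> [s [s_size s_basis]] d_gt0; have s0 : (0 < size s)%N by rewrite s_size.
exists s`_0; split; first by apply: (lbasis_mem s_basis); apply: mem_nth.
apply: contraTneq (oner_neq0 K) => s0_eq0.
have := proj1 s_basis (fun i => (i == 0%N)%:R); rewrite lcomb_delta // s0_eq0.
by move=> /(_ erefl 0%N s0) /eqP; rewrite negbK.
Qed.

(* Transport of dimension along a linear bijection f with inverse g:
   the image of S, i.e. its preimage under g, has the same dimension. *)
Lemma ldim_image S d (f g : V -> V) : linear f -> cancel f g -> cancel g f ->
  ldim S d -> ldim (fun y => S (g y)) d.
Proof.
move=> f_lin fK gK [s [<- [s_free S_span]]].
have f0 : f 0 = 0 by rewrite -(lcomb0 [::]) -lcomb_map // !lcomb_nil.
exists (map f s); rewrite size_map; split=> //; split.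
  move=> c; rewrite lcomb_map // size_map => fc0; apply: s_free.
  by rewrite -[lcomb c s]fK fc0 -{1}f0 fK.
move=> y; split=> [/S_span [c c_eq]|[c ->]]; first by exists c; rewrite lcomb_map // -c_eq gK.
by rewrite lcomb_map // fK; apply/S_span; exists c.
Qed.

Definition capS U W := fun z : V => U z /\ W z.
Definition addS U W := fun z : V => exists x y, U x /\ W y /\ z = x + y.

Lemma capS_subspace U W : lsubspace U -> lsubspace W -> lsubspace (capS U W).
Proof. by move=> [U0 U_lin] [W0 W_lin]; split=> // a x y [? ?] [? ?]; split; auto. Qed.

(* Heart of the modular law: if w is a basis of U :&: W and w ++ u, w ++ v are
   bases of U and W, then w ++ u ++ v is free.  A relation splits as X + Y = 0
   with X in U and Y in the span of v; then Y lies in U :&: W, hence in the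
   span of w, and freeness of w ++ v forces Y = 0. *)
Lemma lfree_union U W w u v :
  lbasis (capS U W) w -> lbasis U (w ++ u) -> lbasis W (w ++ v) -> lfree (w ++ u ++ v).
Proof.
move=> w_basis wu_basis wv_basis c; rewrite catA lcomb_cat.
set cv := fun i => c (size (w ++ u) + i)%N.
set X := lcomb c (w ++ u); set Y := lcomb cv v => XY0.
have UY : U Y.
  have -> : Y = (-1) *: X by apply/eqP; rewrite scaleN1r -addr_eq0 addrC XY0.
  apply: lsubspaceZ (ldim_subspace (lbasis_ldim wu_basis)) _.
  by apply/(proj2 wu_basis); exists c.
have WY : W Y.
  apply/(proj2 wv_basis); apply: (lspan_trans _ (ex_intro _ cv erefl)) => x x_v.
  by apply: lspan_mem; rewrite mem_cat x_v orbT.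
have [d Yd] : lspan w Y by apply/(proj2 w_basis).
have rel : lcomb (fun i => if (i < size w)%N then - d i else cv (i - size w)%N) (w ++ v) = 0.
  rewrite lcomb_cat (eq_lcomb (c2 := (fun i => -1 * d i))) => [|i ->]; last by rewrite mulN1r.
  rewrite lcombZ -Yd (eq_lcomb (c2 := cv)) => [|i _]; last by rewrite ltnNge leq_addr addKn.
  by rewrite scaleN1r addNr.
have cv0 i : (i < size v)%N -> cv i = 0.
  move=> lt_i; have := proj1 wv_basis _ rel (size w + i)%N.
  by rewrite [(_ < size w)%N]ltnNge leq_addr addKn /= size_cat ltn_add2l; apply.
have Y0 : Y = 0 by rewrite /Y (eq_lcomb (c2 := (fun _ => 0))) ?lcomb0.
rewrite Y0 addr0 in XY0; move=> i; rewrite !size_cat => lt_i.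
case: (ltnP i (size w + size u)) => [lt_iwu|le_wu_i].
  by apply: (proj1 wu_basis _ XY0); rewrite size_cat.
have := cv0 (i - (size w + size u))%N; rewrite /cv size_cat subnKC //; apply.
by rewrite ltn_subLR // addnA.
Qed.

Lemma ldim_modular U W p q : ldim U p -> ldim W q ->
  exists r e, ldim (capS U W) r /\ ldim (addS U W) e /\ (r + e = p + q)%N.
Proof.
move=> Up Wq; have U_sub := ldim_subspace Up; have W_sub := ldim_subspace Wq.
have [tu [_ [_ U_span]]] := Up; have [tv [_ [_ W_span]]] := Wq.
have [w w_basis _] := lbasis_exists (capS_subspace U_sub W_sub)
  (fun z UWz => proj1 (U_span z) (proj1 UWz)).
have wU x : x \in w -> U x by move=> /(lbasis_mem w_basis) [].
have wW x : x \in w -> W x by move=> /(lbasis_mem w_basis) [].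
have [u [_ wu_basis]] := lbasis_extend U_sub (fun z => proj1 (U_span z)) (proj1 w_basis) wU.
have [v [vW wv_basis]] := lbasis_extend W_sub (fun z => proj1 (W_span z)) (proj1 w_basis) wW.
have wu_size : size (w ++ u) = p := ldim_unique (lbasis_ldim wu_basis) Up.
have wv_size : size (w ++ v) = q := ldim_unique (lbasis_ldim wv_basis) Wq.
exists (size w), (size (w ++ u ++ v)); split; first exact: lbasis_ldim.
split; last by rewrite -wu_size -wv_size !size_cat; lia.
apply: lbasis_ldim; split; first exact: lfree_union w_basis wu_basis wv_basis.
move=> z; split.
  move=> [x [y [Ux [Wy ->]]]]; apply: lsubspaceD (lspan_subspace _) _ _.
    apply: (lspan_trans _ (proj1 (proj2 wu_basis x) Ux)) => a a_wu.
    by apply: lspan_mem; rewrite catA mem_cat a_wu.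
  apply: (lspan_trans _ (proj1 (proj2 wv_basis y) Wy)) => a.
  by rewrite !mem_cat => /orP [] a_in; apply: lspan_mem; rewrite !mem_cat a_in ?orbT.
move=> [c ->]; rewrite catA lcomb_cat; do 2!eexists; split; last split; last by [].
  by apply: lsubspace_lcomb (ldim_subspace Up) _ => x; apply: lbasis_mem.
exact: lsubspace_lcomb W_sub vW.
Qed.

End FiniteLinearAlgebra.

Section SpansInAlgebras.
Variables (K : fieldType) (L : unitAlgType K).
Implicit Types (A B P S : L -> Prop) (s : seq L).

Lemma kspanE P v : kspan P v <-> exists s, (forall x, x \in s -> P x) /\ lspan s v.
Proof.
split=> [[s [c [sP ->]]]|[s [sP [c ->]]]].
  by exists s; split=> //; exists (nth 0 c).
by exists s, (mkseq c (size s)); split=> //; apply: eq_bigr => i _; rewrite nth_mkseq.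
Qed.

Lemma kspan_seq s v : kspan (fun x => x \in s) v <-> lspan s v.
Proof.
rewrite kspanE; split=> [[t [ts t_span]]|s_span]; last by exists s.
by apply: lspan_trans t_span => x /ts; apply: lspan_mem.
Qed.

Lemma kfreeE s : kfree s <-> lfree s.
Proof.
split=> [s_free c c0 i lt_i|s_free c c0 i].
  exact: (s_free (fun j : 'I_(size s) => c j) c0 (Ordinal lt_i)).
rewrite -(ord_coefE c); apply: s_free (ltn_ord i).
by rewrite -c0; apply: eq_bigr => j _; rewrite ord_coefE.
Qed.

Lemma has_kdimE S d : has_kdim S d <-> ldim S d.
Proof.
by split=> [[s [s_size [/kfreeE s_free S_span]]]|[s [s_size [/kfreeE s_free S_span]]]];
  exists s; split=> //; split=> // v; rewrite S_span kspan_seq.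
Qed.

Lemma kspan_subspace P : lsubspace (kspan P).
Proof.
split; first by apply/kspanE; exists [::]; split=> //; exists (fun _ => 0); rewrite lcomb_nil.
move=> a x y /kspanE [s1 [s1P x_span]] /kspanE [s2 [s2P y_span]]; apply/kspanE.
exists (s1 ++ s2); split=> [z|]; first by rewrite mem_cat => /orP [/s1P|/s2P].
have [_ span_lin] := lspan_subspace (s1 ++ s2); apply: span_lin.
  by apply: lspan_trans x_span => z z1; apply: lspan_mem; rewrite mem_cat z1.
by apply: lspan_trans y_span => z z2; apply: lspan_mem; rewrite mem_cat z2 orbT.
Qed.

(* Multiplications on either side are K-linear since K is central. *)
Lemma lmul_linear (a : L) : linear (fun z => a * z).
Proof. by move=> k x y; rewrite mulrDr scalerAr. Qed.

Lemma rmul_linear (a : L) : linear (fun z => z * a).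
Proof. by move=> k x y; rewrite mulrDl scalerAl. Qed.

Lemma lspan_mul s1 s2 x y : lspan s1 x -> lspan s2 y ->
  lspan [seq a * b | a <- s1, b <- s2] (x * y).
Proof.
move=> [c1 ->] [c2 ->]; rewrite -(lcomb_map _ _ (rmul_linear _)).
apply: lsubspace_lcomb (lspan_subspace _) _ => _ /mapP [a a_s1 ->].
rewrite -(lcomb_map _ _ (lmul_linear _)).
apply: lsubspace_lcomb (lspan_subspace _) _ => _ /mapP [b b_s2 ->].
by apply: lspan_mem; apply/allpairsP; exists (a, b).
Qed.

Lemma ldim_kspan_prodset A B m n : ldim A m -> ldim B n ->
  exists p, ldim (kspan (prodset A B)) p.
Proof.
move=> [sa [_ [_ A_span]]] [sb [_ [_ B_span]]].
have [|u u_basis _] := lbasis_exists (kspan_subspace (prodset A B))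
  (t := [seq a * b | a <- sa, b <- sb]); last by exists (size u), u.
move=> v /kspanE [s [sAB s_span]]; apply: lspan_trans s_span => _ /sAB [x [y [Ax [By ->]]]].
by apply: lspan_mul; [apply/A_span|apply/B_span].
Qed.

End SpansInAlgebras.

Section DivisionRing.
Variables (K : fieldType) (L : unitAlgType K).
Hypothesis hdiv : division_ring L.
Implicit Types (A B C S : L -> Prop).

Lemma ldim_lmul S d a : a \is a GRing.unit -> ldim S d -> ldim (fun z => S (a * z)) d.
Proof.
by move=> a_unit; apply: ldim_image (lmul_linear a^-1) (mulVKr a_unit) (mulKr a_unit).
Qed.

Lemma ldim_rmul S d a : a \is a GRing.unit -> ldim S d -> ldim (fun z => S (z * a)) d.
Proof.
by move=> a_unit; apply: ldim_image (rmul_linear a^-1) (mulrVK a_unit) (mulrK a_unit).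
Qed.

(* If x S is contained in the nonzero finite-dimensional subspace S, then x is
   algebraic over K: for s0 <> 0 in S, the d + 1 vectors x^i s0 (i <= d) of S are
   dependent, and s0 is invertible. *)
Lemma lmul_stable_algebraic S d x : ldim S d -> (0 < d)%N ->
  (forall z, S z -> S (x * z)) -> algebraic_over x.
Proof.
move=> Sd d_gt0 xS; have [s0 [Ss0 s0_neq0]] := ldim_nonzero Sd d_gt0.
have [b [b_size [_ S_span]]] := Sd.
pose T := mkseq (fun i => x ^+ i * s0) d.+1.
have TS y : y \in T -> S y.
  move=> /mapP [i _ ->]; elim: i => [|i IH]; first by rewrite mul1r.
  by rewrite exprS -mulrA; apply: xS.
have [|c [c0 [i lt_i ci]]] := lcomb_dependent (t := b) _
  (fun y Ty => proj1 (S_span y) (TS y Ty)).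
  by rewrite size_mkseq b_size.
rewrite size_mkseq in lt_i.
exists (\poly_(j < d.+1) c j); split.
  by apply: contraNneq ci => /polyP /(_ i); rewrite coef_poly lt_i coef0 => ->.
have : horner_alg x (\poly_(j < d.+1) c j) * s0 = 0.
  rewrite -[RHS]c0 /lcomb -(big_mkord xpredT (fun j => c j *: T`_j)) size_mkseq big_mkord.
  rewrite poly_def linear_sum mulr_suml; apply: eq_bigr => j _.
  by rewrite linearZ /= rmorphXn /= horner_algX mulr_algl nth_mkseq // scalerAl.
by move/(congr1 (fun z => z * s0^-1)); rewrite mul0r mulrK //; apply: hdiv.
Qed.

Definition mul_into A B C := forall x y, A x -> B y -> C (x * y).

(* A b and a B are copies of A and B inside C, so dim A, dim B <= dim C. *)
Lemma ldim_factor_le A B C m n c : ldim A m -> ldim B n -> ldim C c ->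
  (0 < m)%N -> (0 < n)%N -> mul_into A B C -> (m <= c)%N /\ (n <= c)%N.
Proof.
move=> Am Bn Cc m_gt0 n_gt0 ABC.
have [a [Aa /hdiv a_unit]] := ldim_nonzero Am m_gt0.
have [b [Bb /hdiv b_unit]] := ldim_nonzero Bn n_gt0.
have aV_unit : a^-1 \is a GRing.unit by rewrite unitrV.
have bV_unit : b^-1 \is a GRing.unit by rewrite unitrV.
split.
  apply: ldim_leq (ldim_rmul bV_unit Am) Cc _ => z Azb.
  by rewrite -(mulrVK b_unit z); apply: ABC.
apply: ldim_leq (ldim_lmul aV_unit Bn) Cc _ => z Baz.
by rewrite -(mulVKr a_unit z); apply: ABC.
Qed.

(* Replacing A, B, C by a^-1 A, B b^-1, a^-1 C b^-1 for nonzero a in A and b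
   in B, we may assume that 1 lies in both A and B. *)
Lemma normalize_unit A B C m n c : ldim A m -> ldim B n -> ldim C c ->
  (0 < m)%N -> (0 < n)%N -> mul_into A B C ->
  exists A0 B0 C0, [/\ ldim A0 m, ldim B0 n, ldim C0 c, A0 1 /\ B0 1 & mul_into A0 B0 C0].
Proof.
move=> Am Bn Cc m_gt0 n_gt0 ABC.
have [a [Aa /hdiv a_unit]] := ldim_nonzero Am m_gt0.
have [b [Bb /hdiv b_unit]] := ldim_nonzero Bn n_gt0.
exists (fun z => A (a * z)), (fun z => B (z * b)), (fun z => C (a * (z * b))).
split; [exact: ldim_lmul|exact: ldim_rmul|exact: (ldim_rmul b_unit (ldim_lmul a_unit Cc))| |].
  by rewrite mulr1 mul1r.
move=> x y Aax Byb; have -> : a * (x * y * b) = a * x * (y * b) by rewrite !mulrA.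
exact: ABC.
Qed.

End DivisionRing.

Section Kemperman.
Variables (K : fieldType) (L : unitAlgType K).
Hypothesis hdiv : division_ring L.
Hypothesis htr : forall x : L, ~ in_K x -> ~ algebraic_over x.
Implicit Types (A B C : L -> Prop).

(* Base case: if 1 lies in A and B and A :&: B is contained in K, then
   dim A + dim B = dim (A :&: B) + dim (A + B) <= 1 + dim C, as A + B lies in
   A B. *)
Lemma dim_sum_meet_in_K A B C m n c : ldim A m -> ldim B n -> ldim C c ->
  A 1 -> B 1 -> mul_into A B C -> (forall g, A g -> B g -> in_K g) ->
  (m + n <= c.+1)%N.
Proof.
move=> Am Bn Cc A1 B1 ABC AB_K.
have [r [e [ABr [ABe <-]]]] := ldim_modular Am Bn.
have r_le1 : (r <= 1)%N.
  apply: (ldim_spanned (t := [:: 1]) ABr) => v [Av Bv].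
  by have [k ->] := AB_K v Av Bv; exists (fun _ => k); rewrite lcomb_cons lcomb_nil addr0.
have e_le_c : (e <= c)%N.
  apply: (ldim_leq ABe Cc) => _ [x [y [Ax [By ->]]]].
  apply: lsubspaceD (ldim_subspace Cc) _ _; first by rewrite -[x]mulr1; apply: ABC.
  by rewrite -[y]mul1r; apply: ABC.
by rewrite -add1n leq_add.
Qed.

(* Dyson's transform: if 1 lies in A and B and g in A :&: B is transcendental,
   then both pairs (A + A g, B :&: g^-1 B) and (A :&: A g, B + g^-1 B) have
   products in C, and by the modular law one of them has dim A + dim B at least
   as large; in case of equality, dim (B :&: g^-1 B) < dim B since otherwise
   g B = B and g would be algebraic. *)
Lemma dyson_transform A B C m n c g : ldim A m -> ldim B n -> ldim C c ->
  A 1 -> B 1 -> mul_into A B C -> A g -> B g -> ~ in_K g ->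
  exists A' B' m' n', [/\ ldim A' m', ldim B' n', (0 < m')%N /\ (0 < n')%N,
    mul_into A' B' C & (m + n < m' + n')%N \/ (m' + n' = m + n /\ n' < n)%N].
Proof.
move=> Am Bn Cc A1 B1 ABC A_g B_g g_notin_K.
have g_neq0 : g != 0 by apply: contra_notN g_notin_K => /eqP ->; exists 0; rewrite scale0r.
have g_unit := hdiv g_neq0; have gV_unit : g^-1 \is a GRing.unit by rewrite unitrV.
have C_sub := ldim_subspace Cc.
pose Ag' := fun z => A (z * g^-1); pose gB := fun z => B (g * z).
have [a1 [a2 [Ai [Au a12]]]] := ldim_modular Am (ldim_rmul gV_unit Am : ldim Ag' m).
have [b1 [b2 [Bi [Bu b12]]]] := ldim_modular Bn (ldim_lmul g_unit Bn : ldim gB n).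
have Au1 : addS A Ag' 1.
  exists 1, 0; split; last split; rewrite /Ag' ?mul0r ?addr0 //.
  exact: lsubspace0 (ldim_subspace Am).
have Bu1 : addS B gB 1.
  exists 1, 0; split; last split; rewrite /gB ?mulr0 ?addr0 //.
  exact: lsubspace0 (ldim_subspace Bn).
case: (leqP (m + n) (a2 + b1)) => [le_mn_a2b1|lt_a2b1_mn].
  exists (addS A Ag'), (capS B gB), a2, b1; split=> //.
  - by split; [apply: ldim_gt0 Au Au1 (oner_neq0 L)|
      apply: (ldim_gt0 Bi _ (oner_neq0 L)); split; rewrite /gB ?mulr1].
  - move=> _ y [x1 [x2 [Ax1 [Ax2 ->]]]] [By gBy]; rewrite mulrDl.
    apply: lsubspaceD C_sub _ _; first exact: ABC.
    have -> : x2 * y = x2 * g^-1 * (g * y) by rewrite mulrA mulrVK.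
    exact: ABC.
  move: le_mn_a2b1; rewrite leq_eqVlt => /orP [/eqP mn_eq|]; last by left.
  have capB v : capS B gB v -> B v by case.
  right; split=> //; rewrite ltn_neqAle (ldim_leq Bi Bn capB) andbT.
  apply: contra_notN g_notin_K => /eqP b1_eq_n; apply: NNPP => /htr; apply.
  apply: (lmul_stable_algebraic hdiv Bn (ldim_gt0 Bn B1 (oner_neq0 L))) => z Bz.
  by rewrite b1_eq_n in Bi; have [] := ldim_eq_incl Bi Bn capB Bz.
exists (capS A Ag'), (addS B gB), a1, b2; split=> //.
- split; last exact: ldim_gt0 Bu Bu1 (oner_neq0 L).
  by apply: (ldim_gt0 Ai _ g_neq0); split; rewrite /Ag' ?mulrV.
- move=> x _ [Ax Ax'] [y1 [y2 [By1 [By2 ->]]]]; rewrite mulrDr.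
  apply: lsubspaceD C_sub _ _; first exact: ABC.
  have -> : x * y2 = x * g^-1 * (g * y2) by rewrite mulrA mulrVK.
  exact: ABC.
by left; lia.
Qed.

(* Lexicographic progress measure: a larger m + n, or the same m + n with a
   smaller n; bounded as long as m + n <= 2 dim C and n <= dim C. *)
Definition progress c m n := ((c.*2.+1 - (m + n)) * c.+1 + n)%N.

Lemma progress_lt c m n m' n' : (m + n <= c.*2)%N -> (n' <= c)%N ->
  (m + n < m' + n')%N \/ (m' + n' = m + n /\ n' < n)%N ->
  (progress c m' n' < progress c m n)%N.
Proof. by rewrite /progress => *; nia. Qed.

Lemma kemperman A B C m n c : ldim A m -> ldim B n -> ldim C c ->
  (0 < m)%N -> (0 < n)%N -> mul_into A B C -> (m + n <= c.+1)%N.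
Proof.
have [N] := ubnP (progress c m n); elim: N => // N IH in A B C m n *.
move=> lt_mN Am Bn Cc m_gt0 n_gt0 ABC.
have [m_le_c n_le_c] := ldim_factor_le hdiv Am Bn Cc m_gt0 n_gt0 ABC.
have [A0 [B0 [C0 [A0m B0n C0c [A01 B01] A0B0C0]]]] :=
  normalize_unit hdiv Am Bn Cc m_gt0 n_gt0 ABC.
have [[g [A0g [B0g g_notin_K]]]|no_g] :=
  classic (exists g, A0 g /\ B0 g /\ ~ in_K g); last first.
  apply: (dim_sum_meet_in_K A0m B0n C0c A01 B01 A0B0C0) => g A0g B0g.
  by apply: NNPP => g_notin_K; apply: no_g; exists g.
have [A' [B' [m' [n' [A'm B'n [m'_gt0 n'_gt0] A'B'C0 better]]]]] :=
  dyson_transform A0m B0n C0c A01 B01 A0B0C0 A0g B0g g_notin_K.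
have [_ n'_le_c] := ldim_factor_le hdiv A'm B'n C0c m'_gt0 n'_gt0 A'B'C0.
have le_m'n' : (m' + n' <= c.+1)%N.
  apply: IH A'm B'n C0c m'_gt0 n'_gt0 A'B'C0.
  have mn_le : (m + n <= c.*2)%N by rewrite -addnn leq_add.
  exact: leq_trans (progress_lt mn_le n'_le_c better) lt_mN.
by case: better => [lt_mn|[<- _]] //; apply: leq_trans (ltnW lt_mn) le_m'n'.
Qed.

End Kemperman.

Theorem mainTheorem7 (K : fieldType) (L : unitAlgType K)
  (hdiv : division_ring L)
  (htr : forall x : L, ~ in_K x -> ~ algebraic_over x)
  (A B : L -> Prop) (hA : ksubspace A) (hB : ksubspace B)
  (m n : nat) (hAd : has_kdim A m) (hBd : has_kdim B n)
  (hm : (0 < m)%N) (hn : (0 < n)%N) :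
  (exists p, has_kdim (kspan (prodset A B)) p) /\
  (forall p, has_kdim (kspan (prodset A B)) p -> (m + n - 1 <= p)%N).
Proof.
move/has_kdimE: hAd => Am; move/has_kdimE: hBd => Bn.
split.
  by have [p ABp] := ldim_kspan_prodset Am Bn; exists p; apply/has_kdimE.
move=> p /has_kdimE ABp.
have AB_in_span : mul_into A B (kspan (prodset A B)).
  move=> x y Ax By; apply/kspanE; exists [:: x * y]; split.
    by move=> z; rewrite inE => /eqP ->; exists x, y.
  exact: lspan_mem (mem_head _ _).
have := kemperman hdiv htr Am Bn ABp hm hn AB_in_span.
by rewrite leq_subLR addnC add1n.
Qed.
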